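(* Let $V$ be a commutative unital quantale whose underlying lattice is a frame. Let $(X,a,+)$ be a $V$-group and $S$ a subgroup of $X$, equipped with the restriction of $a$ to $S\times S$. Then the inclusion $V$-functor $S\hookrightarrow X$ is open if and only if it is proper.
   Context: A commutative unital quantale $V$ is a complete lattice with a commutative associative operation $\otimes$ with unit $k$ preserving arbitrary joins in each variable. A $V$-category $(X,a)$: $a\colon X\times X\to V$ with $k\le a(x,x)$ and $a(x,x')\otimes a(x',x'')\le a(x,x'')$. A $V$-group $(X,a,+)$ is a $V$-category with a group structure (additive, not necessarily abelian) such that $a(x_1,x_2)\otimes a(x_1',x_2')\le a(x_1+x_1',x_2+x_2')$. A $V$-functor $f\colon(X,a)\to(Y,b)$ (a map with $a(x,x')\le b(f(x),f(x'))$) is proper if $b(f(x),y)=\bigvee\{a(x,x')\mid f(x')=y\}$ for all $x\in X$, $y\in Y$, and open if $b(y,f(x))=\bigvee\{a(x',x)\mid f(x')=y\}$ for all $x\in X$, $y\in Y$ (empty joins being $\bot$). *)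

Set Implicit Arguments.
Unset Strict Implicit.



Record Quantale : Type := {
  qcar :> Type;
  qle : qcar -> qcar -> Prop;
  qle_refl : forall x, qle x x;
  qle_trans : forall x y z, qle x y -> qle y z -> qle x z;
  qle_antisym : forall x y, qle x y -> qle y x -> x = y;
  qsup : (qcar -> Prop) -> qcar;
  qsup_ub : forall (A : qcar -> Prop) x, A x -> qle x (qsup A);
  qsup_least : forall (A : qcar -> Prop) y,
      (forall x, A x -> qle x y) -> qle (qsup A) y;
  qten : qcar -> qcar -> qcar;
  qten_assoc : forall x y z, qten x (qten y z) = qten (qten x y) z;
  qten_comm : forall x y, qten x y = qten y x;
  qk : qcar;
  qten_k : forall x, qten qk x = x;
  qten_supr : forall x (A : qcar -> Prop),
      qten x (qsup A) = qsup (fun z => exists y, A y /\ z = qten x y);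
  qten_supl : forall x (A : qcar -> Prop),
      qten (qsup A) x = qsup (fun z => exists y, A y /\ z = qten y x)
}.
Arguments qle {q} _ _.
Arguments qsup {q} _.
Arguments qten {q} _ _.

Definition qmeet (V : Quantale) (x y : qcar V) : qcar V :=
  qsup (fun z => qle z x /\ qle z y).
Arguments qmeet {V} _ _.

Definition is_frame (V : Quantale) : Prop :=
  forall (x : V) (A : V -> Prop),
    qmeet x (qsup A) = qsup (fun z => exists y, A y /\ z = qmeet x y).

Definition is_Vcat (V : Quantale) (X : Type) (a : X -> X -> V) : Prop :=
  (forall x, qle (qk V) (a x x)) /\
  (forall x x' x'', qle (qten (a x x') (a x' x'')) (a x x'')).

Record GroupOn (X : Type) := {
  gzero : X;
  gadd : X -> X -> X;
  gopp : X -> X;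
  gaddA : forall x y z, gadd x (gadd y z) = gadd (gadd x y) z;
  gadd0l : forall x, gadd gzero x = x;
  gadd0r : forall x, gadd x gzero = x;
  gaddNl : forall x, gadd (gopp x) x = gzero;
  gaddNr : forall x, gadd x (gopp x) = gzero
}.

Definition is_Vgroup (V : Quantale) (X : Type) (G : GroupOn X)
    (a : X -> X -> V) : Prop :=
  is_Vcat a /\
  forall x1 x2 x1' x2',
    qle (qten (a x1 x2) (a x1' x2')) (a (gadd G x1 x1') (gadd G x2 x2')).

Definition is_subgroup (X : Type) (G : GroupOn X) (S : X -> Prop) : Prop :=
  S (gzero G) /\
  (forall x y, S x -> S y -> S (gadd G x y)) /\
  (forall x, S x -> S (gopp G x)).

Definition is_Vfunctor (V : Quantale) (X Y : Type) (a : X -> X -> V)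
    (b : Y -> Y -> V) (f : X -> Y) : Prop :=
  forall x x', qle (a x x') (b (f x) (f x')).

Definition is_proper (V : Quantale) (X Y : Type) (a : X -> X -> V)
    (b : Y -> Y -> V) (f : X -> Y) : Prop :=
  forall x y, b (f x) y = qsup (fun v => exists x', f x' = y /\ v = a x x').

Definition is_open (V : Quantale) (X Y : Type) (a : X -> X -> V)
    (b : Y -> Y -> V) (f : X -> Y) : Prop :=
  forall x y, b y (f x) = qsup (fun v => exists x', f x' = y /\ v = a x' x).

Definition restrict (V : Quantale) (X : Type) (S : X -> Prop)
    (a : X -> X -> V) : {x : X | S x} -> {x : X | S x} -> V :=
  fun u v => a (proj1_sig u) (proj1_sig v).
Arguments restrict {V X} S a _ _.

(** The inclusion of a subgroup [S] is proper iff [a s y] is bottom whenever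
    [s ∈ S] and [y ∉ S], and open iff [a y s] is bottom in the same situation.
    In a V-group, translating by [-x] on the right and by [-x'] on the left
    gives [a x x' ≤ a (-x') (-x)]; as negation preserves [S] and its
    complement, each of the two vanishing conditions implies the other. *)

From Stdlib Require Import Setoid Classical_Prop.

Section QuantaleFacts.
Context {V : Quantale}.

Definition qbot : V := qsup (fun _ => False).

Lemma qbot_le (x : V) : qle qbot x.
Proof. apply qsup_least; contradiction. Qed.

Lemma qle_bot_eq (x : V) : qle x qbot -> x = qbot.
Proof. intros Hx; apply qle_antisym; [exact Hx | apply qbot_le]. Qed.

Lemma qsup_empty (A : V -> Prop) : (forall v, ~ A v) -> qsup A = qbot.
Proof.
  intros HA; apply qle_bot_eq, qsup_least.
  intros v Hv; contradiction (HA v Hv).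
Qed.

Lemma qsup_singleton (A : V -> Prop) (v : V) :
  (forall w, A w <-> w = v) -> qsup A = v.
Proof.
  intros HA; apply qle_antisym.
  - apply qsup_least; intros w Hw; apply HA in Hw; subst; apply qle_refl.
  - apply qsup_ub, HA; reflexivity.
Qed.

Lemma qten_monor (x y z : V) : qle y z -> qle (qten x y) (qten x z).
Proof.
  intros Hyz.
  assert (Ez : qsup (fun w => w = y \/ w = z) = z).
  { apply qle_antisym.
    - apply qsup_least; intros w [-> | ->]; [exact Hyz | apply qle_refl].
    - apply qsup_ub; now right. }
  rewrite <- Ez, qten_supr.
  apply qsup_ub; exists y; auto.
Qed.

Lemma qle_ten_unitr (x u : V) : qle (qk V) u -> qle x (qten x u).
Proof.
  intros Hu.
  rewrite <- (qten_k x) at 1; rewrite (qten_comm (qk V)).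
  now apply qten_monor.
Qed.

End QuantaleFacts.

Section SubsetFibers.
Variables (V : Quantale) (X : Type) (S : X -> Prop) (g : X -> V).

Definition fiber_sup (y : X) : V :=
  qsup (fun v => exists x' : {x | S x}, proj1_sig x' = y /\ v = g (proj1_sig x')).

Lemma fiber_sup_in (y : X) : S y -> fiber_sup y = g y.
Proof.
  intros Hy; apply qsup_singleton; intros w; split.
  - intros [[x' Hx'] [Ex' ->]]; simpl in *; now subst.
  - intros ->; now exists (exist _ y Hy).
Qed.

Lemma fiber_sup_out (y : X) : ~ S y -> fiber_sup y = qbot.
Proof.
  intros Hy; apply qsup_empty.
  intros w [[x' Hx'] [Ex' _]]; simpl in Ex'; subst; contradiction.
Qed.

End SubsetFibers.
Arguments fiber_sup_in {V X S} g {y}.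
Arguments fiber_sup_out {V X S} g {y}.

Section SubsetInclusion.
Variables (V : Quantale) (X : Type) (S : X -> Prop) (a : X -> X -> V).

Lemma inclusion_properP :
  is_proper (restrict S a) a (@proj1_sig X S) <->
  (forall s y, S s -> ~ S y -> a s y = qbot).
Proof.
  split.
  - intros Hp s y Hs Hy.
    exact (eq_trans (Hp (exist _ s Hs) y) (fiber_sup_out (a s) Hy)).
  - intros Hbot [s Hs] y; simpl.
    destruct (classic (S y)) as [Hy | Hy].
    + symmetry; exact (fiber_sup_in (a s) Hy).
    + rewrite (Hbot s y Hs Hy); symmetry; exact (fiber_sup_out (a s) Hy).
Qed.

Lemma inclusion_openP :
  is_open (restrict S a) a (@proj1_sig X S) <->
  (forall s y, S s -> ~ S y -> a y s = qbot).
Proof.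
  split.
  - intros Ho s y Hs Hy.
    exact (eq_trans (Ho (exist _ s Hs) y) (fiber_sup_out (fun x => a x s) Hy)).
  - intros Hbot [s Hs] y; simpl.
    destruct (classic (S y)) as [Hy | Hy].
    + symmetry; exact (fiber_sup_in (fun x => a x s) Hy).
    + rewrite (Hbot s y Hs Hy); symmetry; exact (fiber_sup_out (fun x => a x s) Hy).
Qed.

End SubsetInclusion.

Lemma gopp_involutive {X : Type} (G : GroupOn X) (x : X) :
  gopp G (gopp G x) = x.
Proof.
  rewrite <- (gadd0r G (gopp G (gopp G x))), <- (gaddNl G x), gaddA,
    gaddNl, gadd0l.
  reflexivity.
Qed.

Lemma subgroup_opp_notin {X : Type} {G : GroupOn X} {S : X -> Prop} {y : X} :
  is_subgroup G S -> ~ S y -> ~ S (gopp G y).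
Proof.
  intros [_ [_ HN]] Hy Hny; apply Hy.
  rewrite <- (gopp_involutive G y); exact (HN _ Hny).
Qed.

Section VGroup.
Context {V : Quantale} {X : Type} {G : GroupOn X} {a : X -> X -> V}.
Hypothesis hX : is_Vgroup G a.

Lemma Vgroup_le_addr (x y z : X) : qle (a x y) (a (gadd G x z) (gadd G y z)).
Proof.
  destruct hX as [[Hrefl _] Hadd].
  eapply qle_trans; [apply (qle_ten_unitr (a x y) _ (Hrefl z)) | apply Hadd].
Qed.

Lemma Vgroup_le_addl (x y z : X) : qle (a x y) (a (gadd G z x) (gadd G z y)).
Proof.
  destruct hX as [[Hrefl _] Hadd].
  eapply qle_trans; [apply (qle_ten_unitr (a x y) _ (Hrefl z)) |].
  rewrite qten_comm; apply Hadd.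
Qed.

Lemma Vgroup_le_opp (x x' : X) : qle (a x x') (a (gopp G x') (gopp G x)).
Proof.
  eapply qle_trans; [apply (Vgroup_le_addr x x' (gopp G x)) |].
  rewrite gaddNr.
  eapply qle_trans; [apply (Vgroup_le_addl (gzero G) _ (gopp G x')) |].
  rewrite gadd0r, gaddA, gaddNl, gadd0l; apply qle_refl.
Qed.

Lemma Vgroup_subgroup_bot_sym {S : X -> Prop} :
  is_subgroup G S ->
  (forall s y, S s -> ~ S y -> a y s = qbot) <->
  (forall s y, S s -> ~ S y -> a s y = qbot).
Proof.
  intros hS.
  assert (HN : forall s, S s -> S (gopp G s)) by apply hS.
  split; intros Hbot s y Hs Hy; apply qle_bot_eq;
    rewrite <- (Hbot (gopp G s) (gopp G y) (HN s Hs) (subgroup_opp_notin hS Hy));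
    apply Vgroup_le_opp.
Qed.

End VGroup.

(* [hV] is unused: the argument works in any commutative unital quantale. *)
Theorem corollary5p7 (V : Quantale) (hV : is_frame V)
    (X : Type) (G : GroupOn X) (a : X -> X -> V) (hX : is_Vgroup G a)
    (S : X -> Prop) (hS : is_subgroup G S) :
  is_open (restrict S a) a (@proj1_sig X S) <->
  is_proper (restrict S a) a (@proj1_sig X S).
Proof.
  rewrite inclusion_openP, inclusion_properP.
  exact (Vgroup_subgroup_bot_sym hX hS).
Qed.
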